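(* Let $\mathcal C$ be a cartesian closed category with regular epi-mono factorizations (every arrow factors as a regular epimorphism followed by a monomorphism), and let $S$ be an object of $\mathcal C$ having at least one global element $1\to S$. Then the functor $U:\mathcal C\to\mathcal C$, $X\mapsto X^S$, is monadic: the comparison functor $K:\mathcal C\to\mathbf{Alg}^T$, $KY=(Y^S,\epsilon_Y^S)$, $Kg=g^S$, is an equivalence of categories, where $T=UF$ is the state monad of the adjunction $F\dashv U$ with $F(X)=S\times X$.
   Context: $TX=(S\times X)^S$; $\epsilon_Z:S\times Z^S\to Z$ is evaluation (the counit); for $f:S\times X\to Z$, $f^*:X\to Z^S$ is its transpose; $\eta_X=(\mathrm{id}_{S\times X})^*$, $\mu_X=(\epsilon_{S\times X})^S$. A $T$-algebra is a pair $(X,h)$ with $h:TX\to X$, $h\circ Th=h\circ\mu_X$, $h\circ\eta_X=\mathrm{id}_X$; morphisms $u:(X,h)\to(X',h')$ satisfy $h'\circ Tu=u\circ h$; these form $\mathbf{Alg}^T$. ''Monadic'' means $K$ is an equivalence of categories (not necessarily an isomorphism). *)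

Set Implicit Arguments.
Unset Strict Implicit.

(** * Categories (hom-types with Leibniz equality of morphisms) *)
Record Category := {
  Ob :> Type;
  Hom : Ob -> Ob -> Type;
  idm : forall A, Hom A A;
  comp : forall A B D, Hom B D -> Hom A B -> Hom A D;
  comp_id_l : forall A B (f : Hom A B), comp (idm B) f = f;
  comp_id_r : forall A B (f : Hom A B), comp f (idm A) = f;
  comp_assoc : forall A B D E (f : Hom A B) (g : Hom B D) (h : Hom D E),
      comp h (comp g f) = comp (comp h g) f
}.
Arguments Hom {c} _ _.
Arguments idm {c} A.
Arguments comp {c A B D} _ _.

Declare Scope cat_scope.
Notation "g ∘ f" := (comp g f) (at level 40, left associativity) : cat_scope.
Open Scope cat_scope.

Definition mono (C : Category) (A B : C) (m : Hom A B) : Prop :=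
  forall (Z : C) (a b : Hom Z A), m ∘ a = m ∘ b -> a = b.

Definition regular_epi (C : Category) (A B : C) (e : Hom A B) : Prop :=
  exists (Z : C) (g h : Hom Z A),
    e ∘ g = e ∘ h /\
    forall (W : C) (f : Hom A W), f ∘ g = f ∘ h ->
      exists! k : Hom B W, k ∘ e = f.

Definition has_regular_epi_mono_factorizations (C : Category) : Prop :=
  forall (A B : C) (f : Hom A B),
    exists (M : C) (e : Hom A M) (m : Hom M B),
      regular_epi e /\ mono m /\ f = m ∘ e.

(** * Cartesian closed structure (chosen terminal object, products, exponentials).
    [exp S Z] is Z^S, with evaluation [ev S Z : S × Z^S -> Z] and
    transpose [curry f : X -> Z^S] of [f : S × X -> Z]. *)
Record CCC (C : Category) := {
  one : C;
  bang : forall A : C, Hom A one;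
  bang_uniq : forall (A : C) (f : Hom A one), f = bang A;
  prod : C -> C -> C;
  pr1 : forall A B : C, Hom (prod A B) A;
  pr2 : forall A B : C, Hom (prod A B) B;
  pair : forall (X A B : C), Hom X A -> Hom X B -> Hom X (prod A B);
  pr1_pair : forall X A B (f : Hom X A) (g : Hom X B), pr1 A B ∘ pair f g = f;
  pr2_pair : forall X A B (f : Hom X A) (g : Hom X B), pr2 A B ∘ pair f g = g;
  pair_uniq : forall X A B (f : Hom X A) (g : Hom X B) (h : Hom X (prod A B)),
      pr1 A B ∘ h = f -> pr2 A B ∘ h = g -> h = pair f g;
  exp : C -> C -> C;
  ev : forall S Z : C, Hom (prod S (exp S Z)) Z;
  curry : forall (S X Z : C), Hom (prod S X) Z -> Hom X (exp S Z);
  ev_curry : forall S X Z (f : Hom (prod S X) Z),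
      ev S Z ∘ pair (pr1 S X) (curry f ∘ pr2 S X) = f;
  curry_uniq : forall S X Z (f : Hom (prod S X) Z) (g : Hom X (exp S Z)),
      ev S Z ∘ pair (pr1 S X) (g ∘ pr2 S X) = f -> g = curry f
}.
Arguments one {C} c.
Arguments prod {C} c _ _.
Arguments pr1 {C} c A B.
Arguments pr2 {C} c A B.
Arguments pair {C} c {X A B} _ _.
Arguments exp {C} c _ _.
Arguments ev {C} c S Z.
Arguments curry {C} c {S X Z} _.

Section StateMonad.
Variables (C : Category) (H : CCC C) (S : C).

Definition prodmap (A B A' B' : C) (f : Hom A A') (g : Hom B B')
  : Hom (prod H A B) (prod H A' B') :=
  pair H (f ∘ pr1 H A B) (g ∘ pr2 H A B).

Definition expmap (X Y : C) (g : Hom X Y) : Hom (exp H S X) (exp H S Y) :=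
  curry H (g ∘ ev H S X).

Definition Tob (X : C) : C := exp H S (prod H S X).
Definition Tmap (X Y : C) (u : Hom X Y) : Hom (Tob X) (Tob Y) :=
  expmap (prodmap (idm S) u).

Definition eta (X : C) : Hom X (Tob X) := curry H (idm (prod H S X)).
Definition mu (X : C) : Hom (Tob (Tob X)) (Tob X) := expmap (ev H S (prod H S X)).

Definition is_T_algebra (X : C) (h : Hom (Tob X) X) : Prop :=
  h ∘ Tmap h = h ∘ mu X /\ h ∘ eta X = idm X.

Definition is_T_algebra_hom (X : C) (h : Hom (Tob X) X) (X' : C) (h' : Hom (Tob X') X')
  (u : Hom X X') : Prop :=
  h' ∘ Tmap u = u ∘ h.

Definition Kstr (Y : C) : Hom (Tob (exp H S Y)) (exp H S Y) := expmap (ev H S Y).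

Definition is_iso (A B : C) (f : Hom A B) : Prop :=
  exists g : Hom B A, g ∘ f = idm A /\ f ∘ g = idm B.

(** The comparison functor K : C -> Alg^T (K Y = (Y^S, eps_Y^S), K g = g^S) is
    well defined and is an equivalence of categories: there is a functor
    G : Alg^T -> C (given by [G0] on objects, [G1] on morphisms; only its values
    on T-algebras / T-algebra morphisms matter) with natural isomorphisms
    Id_C ≅ G K (components [a]) and K G ≅ Id_{Alg^T} (components [b],
    isomorphisms in Alg^T). *)
Definition comparison_is_equivalence : Prop :=
  (forall Y : C, is_T_algebra (Kstr Y)) /\
  (forall (Y Y' : C) (g : Hom Y Y'), is_T_algebra_hom (Kstr Y) (Kstr Y') (expmap g)) /\
  exists (G0 : forall X : C, Hom (Tob X) X -> C)
         (G1 : forall (X : C) (h : Hom (Tob X) X) (X' : C) (h' : Hom (Tob X') X'),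
                 Hom X X' -> Hom (G0 X h) (G0 X' h'))
         (a : forall Y : C, Hom Y (G0 _ (Kstr Y)))
         (b : forall (X : C) (h : Hom (Tob X) X), Hom (exp H S (G0 _ h)) X),
    (forall X (h : Hom (Tob X) X), is_T_algebra h -> G1 _ h _ h (idm X) = idm (G0 _ h)) /\
    (forall X1 (h1 : Hom (Tob X1) X1) X2 (h2 : Hom (Tob X2) X2)
            X3 (h3 : Hom (Tob X3) X3) (u : Hom X1 X2) (v : Hom X2 X3),
        is_T_algebra h1 -> is_T_algebra h2 -> is_T_algebra h3 ->
        is_T_algebra_hom h1 h2 u -> is_T_algebra_hom h2 h3 v ->
        G1 _ h1 _ h3 (v ∘ u) = G1 _ h2 _ h3 v ∘ G1 _ h1 _ h2 u) /\
    (forall Y : C, is_iso (a Y)) /\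
    (forall (Y Y' : C) (g : Hom Y Y'),
        G1 _ (Kstr Y) _ (Kstr Y') (expmap g) ∘ a Y = a Y' ∘ g) /\
    (forall X (h : Hom (Tob X) X), is_T_algebra h ->
        is_T_algebra_hom (Kstr (G0 _ h)) h (b _ h) /\
        exists binv : Hom X (exp H S (G0 _ h)),
          binv ∘ b _ h = idm _ /\ b _ h ∘ binv = idm X /\
          is_T_algebra_hom h (Kstr (G0 _ h)) binv) /\
    (forall X (h : Hom (Tob X) X) X' (h' : Hom (Tob X') X') (u : Hom X X'),
        is_T_algebra h -> is_T_algebra h' -> is_T_algebra_hom h h' u ->
        u ∘ b _ h = b _ h' ∘ expmap (G1 _ h _ h' u)).

End StateMonad.

(* Using the global element s0 of S, a T-algebra h on X makes "reset the
   state to s0, then run h" an idempotent e_h = h ∘ reset of X; split it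
   through its image D (an idempotent with a regular epi-mono factorization
   is split, as regular epis are epi). The algebra laws show that X ≅ D^S as
   T-algebras: x is sent to the family s ↦ (the D-part of "set the state to
   s, return x"), and f : D^S back to h applied to the program s ↦ (s, f s).
   For a free algebra Y^S the idempotent is "evaluate at s0, then take the
   constant family", whose image is Y; this gives Y ≅ D(Y^S). *)
From Stdlib Require Import IndefiniteDescription.
Set Implicit Arguments.
Unset Strict Implicit.

Section CartesianClosed.
Variables (C : Category) (H : CCC C).

Lemma pair_comp X Y A B (f : Hom X A) (g : Hom X B) (k : Hom Y X) :
  pair H f g ∘ k = pair H (f ∘ k) (g ∘ k).
Proof.
  apply pair_uniq.
  - rewrite comp_assoc, pr1_pair; reflexivity.
  - rewrite comp_assoc, pr2_pair; reflexivity.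
Qed.

Lemma pair_proj A B : pair H (pr1 H A B) (pr2 H A B) = idm _.
Proof. symmetry; apply pair_uniq; apply comp_id_r. Qed.

Lemma pair_eta X A B (f : Hom X (prod H A B)) :
  pair H (pr1 H A B ∘ f) (pr2 H A B ∘ f) = f.
Proof. symmetry; apply pair_uniq; reflexivity. Qed.

Lemma bang_comp A B (k : Hom A B) : bang H B ∘ k = bang H A.
Proof. apply bang_uniq. Qed.

Lemma curry_comp S X Y Z (f : Hom (prod H S X) Z) (g : Hom Y X) :
  curry H f ∘ g = curry H (f ∘ pair H (pr1 H S Y) (g ∘ pr2 H S Y)).
Proof.
  apply curry_uniq.
  assert (E : pair H (pr1 H S Y) ((curry H f ∘ g) ∘ pr2 H S Y)
              = pair H (pr1 H S X) (curry H f ∘ pr2 H S X)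
                ∘ pair H (pr1 H S Y) (g ∘ pr2 H S Y)).
  { rewrite pair_comp, pr1_pair, <- !comp_assoc, pr2_pair. reflexivity. }
  rewrite E, comp_assoc, ev_curry. reflexivity.
Qed.

Lemma ev_pair_curry S X Z (s : Hom X S) (f : Hom (prod H S X) Z) :
  ev H S Z ∘ pair H s (curry H f) = f ∘ pair H s (idm X).
Proof.
  assert (E : pair H s (curry H f)
              = pair H (pr1 H S X) (curry H f ∘ pr2 H S X) ∘ pair H s (idm X)).
  { rewrite pair_comp, pr1_pair, <- comp_assoc, pr2_pair, comp_id_r. reflexivity. }
  rewrite E, comp_assoc, ev_curry. reflexivity.
Qed.

Lemma exp_ext S A Z (f g : Hom A (exp H S Z)) :
  ev H S Z ∘ pair H (pr1 H S A) (f ∘ pr2 H S A)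
  = ev H S Z ∘ pair H (pr1 H S A) (g ∘ pr2 H S A) ->
  f = g.
Proof.
  intro E. rewrite (curry_uniq E). symmetry. apply curry_uniq. reflexivity.
Qed.

End CartesianClosed.

(* Normal form: composites associated to the right, pairings and curried maps
   pushed outwards, beta-redexes of evaluation contracted. *)
Ltac ccc_simpl :=
  repeat progress (rewrite ?comp_id_l, ?comp_id_r, <- ?comp_assoc, ?pr1_pair,
    ?pr2_pair, ?pair_comp, ?pair_proj, ?pair_eta, ?bang_comp, ?ev_pair_curry,
    ?curry_comp).
Ltac ccc_simpl_in E :=
  repeat progress (rewrite ?comp_id_l, ?comp_id_r, <- ?comp_assoc, ?pr1_pair,
    ?pr2_pair, ?pair_comp, ?pair_proj, ?pair_eta, ?bang_comp, ?ev_pair_curry,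
    ?curry_comp in E).

Ltac unfold_state_monad :=
  unfold is_T_algebra_hom, is_T_algebra, Kstr, Tmap, mu, eta, expmap, prodmap,
    Tob in *.

Section Images.
Variables (C : Category) (factorizations : has_regular_epi_mono_factorizations C).

Lemma regular_epi_epi A B (e : Hom A B) : regular_epi e ->
  forall (W : C) (u v : Hom B W), u ∘ e = v ∘ e -> u = v.
Proof.
  intros [Z [g [k [Egk Ucoeq]]]] W u v E.
  destruct (Ucoeq W (u ∘ e)) as [w [_ Uw]].
  { rewrite <- !comp_assoc, Egk. reflexivity. }
  rewrite <- (Uw u eq_refl). apply Uw. symmetry. exact E.
Qed.

Lemma regular_epi_mono_factorization A B (f : Hom A B) :
  {M : C & {e : Hom A M & {m : Hom M B | regular_epi e /\ mono m /\ f = m ∘ e}}}.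
Proof.
  destruct (constructive_indefinite_description _ (factorizations f)) as [M HM].
  destruct (constructive_indefinite_description _ HM) as [e He].
  destruct (constructive_indefinite_description _ He) as [m Hm].
  exact (existT _ M (existT _ e (exist _ m Hm))).
Qed.

Definition image A B (f : Hom A B) : C := projT1 (regular_epi_mono_factorization f).
Definition image_epi A B (f : Hom A B) : Hom A (image f) :=
  projT1 (projT2 (regular_epi_mono_factorization f)).
Definition image_mono A B (f : Hom A B) : Hom (image f) B :=
  proj1_sig (projT2 (projT2 (regular_epi_mono_factorization f))).

Lemma image_factor A B (f : Hom A B) : image_mono f ∘ image_epi f = f.
Proof.
  unfold image_mono, image_epi, image.
  destruct (regular_epi_mono_factorization f) as [M [e [m [He [Hm E]]]]].
  symmetry. exact E.
Qed.

Lemma image_mono_mono A B (f : Hom A B) : mono (image_mono f).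
Proof.
  unfold image_mono, image.
  destruct (regular_epi_mono_factorization f) as [M [e [m [He [Hm E]]]]]. exact Hm.
Qed.

Lemma image_epi_epi A B (f : Hom A B) (W : C) (u v : Hom (image f) W) :
  u ∘ image_epi f = v ∘ image_epi f -> u = v.
Proof.
  unfold image_epi, image in *. revert u v.
  destruct (regular_epi_mono_factorization f) as [M [e [m [He Hm]]]].
  simpl. intros u v. apply (regular_epi_epi He).
Qed.

Lemma idempotent_image_retract A (e : Hom A A) :
  e ∘ e = e -> image_epi e ∘ image_mono e = idm _.
Proof.
  intro Ee. apply image_epi_epi. rewrite comp_id_l. apply image_mono_mono.
  rewrite !comp_assoc, image_factor, <- comp_assoc, image_factor. exact Ee.
Qed.

End Images.

Section StateAlgebras.
Variables (C : Category) (H : CCC C) (S : C).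

(* [Tob H S X] unfolded: rewriting must match the terms produced by
   [ccc_simpl], which mention [exp] rather than [Tob]. *)
Local Notation TS X := (exp H S (prod H S X)).

Lemma alg_unit X (h : Hom (TS X) X) :
  is_T_algebra h -> h ∘ curry H (idm (prod H S X)) = idm X.
Proof. intros [_ E]. exact E. Qed.

Lemma alg_return X (h : Hom (TS X) X) : is_T_algebra h ->
  forall G (x : Hom G X), h ∘ curry H (pair H (pr1 H S G) (x ∘ pr2 H S G)) = x.
Proof.
  intros [_ E] G x. unfold_state_monad.
  rewrite <- (comp_id_l (pair H (pr1 H S G) (x ∘ pr2 H S G))), <- curry_comp,
    comp_assoc, E.
  apply comp_id_l.
Qed.

(* The multiplication law, in the form "running a program whose result is
   again run by h is the same as running the composite program". *)
Lemma alg_bind X (h : Hom (TS X) X) : is_T_algebra h ->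
  forall G (s : Hom (prod H S G) S) (f : Hom (prod H S (prod H S G)) (prod H S X)),
  h ∘ curry H (pair H s (h ∘ curry H f)) = h ∘ curry H (f ∘ pair H s (idm _)).
Proof.
  intros [E _] G s f.
  pose proof (f_equal (fun k => k ∘ curry H (pair H s (curry H f))) E) as E'.
  simpl in E'. unfold_state_monad.
  ccc_simpl_in E'. ccc_simpl. exact E'.
Qed.

Ltac alg_simpl Hh :=
  repeat progress (ccc_simpl; rewrite ?(alg_bind Hh), ?(alg_unit Hh), ?(alg_return Hh)).

Lemma Tmap_id X : Tmap H S (idm X) = idm _.
Proof. unfold_state_monad. apply exp_ext. ccc_simpl. reflexivity. Qed.

Lemma Tmap_comp X Y Z (f : Hom X Y) (g : Hom Y Z) :
  Tmap H S g ∘ Tmap H S f = Tmap H S (g ∘ f).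
Proof. unfold_state_monad. apply exp_ext. ccc_simpl. reflexivity. Qed.

Lemma Kstr_algebra Y : is_T_algebra (Kstr H S Y).
Proof.
  unfold_state_monad. split; apply exp_ext; ccc_simpl; reflexivity.
Qed.

Lemma Kstr_hom Y Y' (g : Hom Y Y') :
  is_T_algebra_hom (Kstr H S Y) (Kstr H S Y') (expmap H S g).
Proof.
  unfold_state_monad. apply exp_ext. ccc_simpl. reflexivity.
Qed.

Lemma alg_hom_inverse X (h : Hom (Tob H S X) X) X' (h' : Hom (Tob H S X') X')
  (u : Hom X X') (v : Hom X' X) :
  v ∘ u = idm X -> u ∘ v = idm X' ->
  is_T_algebra_hom h h' u -> is_T_algebra_hom h' h v.
Proof.
  unfold is_T_algebra_hom. intros Evu Euv Eu. symmetry.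
  transitivity (v ∘ (h' ∘ (Tmap H S u ∘ Tmap H S v))).
  - rewrite Tmap_comp, Euv, Tmap_id, comp_id_r. reflexivity.
  - rewrite (comp_assoc _ _ h'), Eu, !comp_assoc, Evu, comp_id_l. reflexivity.
Qed.

Variable s0 : Hom (one H) S.

Definition reset X : Hom X (TS X) :=
  curry H (pair H (s0 ∘ bang H (prod H S X)) (pr2 H S X)).

Definition reset_endo X (h : Hom (TS X) X) : Hom X X := h ∘ reset X.

Lemma reset_endo_idem X (h : Hom (TS X) X) : is_T_algebra h ->
  reset_endo h ∘ reset_endo h = reset_endo h.
Proof.
  intro Hh. unfold reset_endo, reset. alg_simpl Hh. reflexivity.
Qed.

Lemma alg_hom_reset_endo X (h : Hom (TS X) X) X' (h' : Hom (TS X') X')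
  (u : Hom X X') : is_T_algebra_hom h h' u ->
  forall Y (k : Hom Y X), reset_endo h' ∘ (u ∘ k) = u ∘ (reset_endo h ∘ k).
Proof.
  unfold reset_endo, reset. unfold_state_monad.
  intros E Y k. rewrite !comp_assoc, <- E. ccc_simpl. reflexivity.
Qed.

Variable factorizations : has_regular_epi_mono_factorizations C.

Definition base X (h : Hom (TS X) X) : C := image factorizations (reset_endo h).
Definition base_retr X (h : Hom (TS X) X) : Hom X (base h) :=
  image_epi factorizations (reset_endo h).
Definition base_incl X (h : Hom (TS X) X) : Hom (base h) X :=
  image_mono factorizations (reset_endo h).

Definition counit X (h : Hom (TS X) X) : Hom (exp H S (base h)) X :=
  h ∘ curry H (pair H (pr1 H S _) (base_incl h ∘ ev H S (base h))).

Definition counit_inv X (h : Hom (TS X) X) : Hom X (exp H S (base h)) :=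
  curry H (base_retr h ∘ (h ∘ curry H (pr2 H S (prod H S X)))).

Section Base.
Variables (X : C) (h : Hom (TS X) X) (Hh : is_T_algebra h).

Lemma base_incl_retr Y (k : Hom Y X) :
  base_incl h ∘ (base_retr h ∘ k) = reset_endo h ∘ k.
Proof.
  rewrite comp_assoc. unfold base_incl, base_retr, base.
  rewrite image_factor. reflexivity.
Qed.

Lemma base_retr_incl Y (k : Hom Y (base h)) : base_retr h ∘ (base_incl h ∘ k) = k.
Proof.
  rewrite comp_assoc. unfold base_retr, base_incl, base.
  rewrite (idempotent_image_retract _ (reset_endo_idem Hh)). apply comp_id_l.
Qed.

Lemma reset_endo_incl : reset_endo h ∘ base_incl h = base_incl h.
Proof.
  rewrite <- (comp_id_r (reset_endo h ∘ _)), <- comp_assoc, <- base_incl_retr.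
  rewrite base_retr_incl, comp_id_r. reflexivity.
Qed.

(* Points of the base are fixed by "reset to any state s and run h", not only
   s = s0. *)
Lemma alg_set_state_incl G (s : Hom G S) (k : Hom G (base h)) :
  h ∘ curry H (pair H (s ∘ pr2 H S G) (base_incl h ∘ (k ∘ pr2 H S G)))
  = base_incl h ∘ k.
Proof.
  rewrite <- reset_endo_incl. unfold reset_endo, reset. alg_simpl Hh. reflexivity.
Qed.

Lemma alg_state_irrelevant_incl G (s : Hom (prod H S G) S)
  (k : Hom (prod H S G) (base h)) :
  h ∘ curry H (pair H s (base_incl h ∘ k))
  = h ∘ curry H (pair H (pr1 H S G) (base_incl h ∘ k)).
Proof.
  rewrite <- (alg_set_state_incl (pr1 H S G) k). alg_simpl Hh. reflexivity.
Qed.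

Lemma counit_counit_inv : counit h ∘ counit_inv h = idm X.
Proof.
  unfold counit, counit_inv. ccc_simpl. rewrite base_incl_retr.
  unfold reset_endo, reset. alg_simpl Hh. reflexivity.
Qed.

Lemma counit_inv_counit : counit_inv h ∘ counit h = idm _.
Proof.
  apply exp_ext. unfold counit, counit_inv. alg_simpl Hh.
  rewrite <- reset_endo_incl. unfold reset_endo at 1, reset. alg_simpl Hh.
  transitivity (base_retr h ∘ (reset_endo h ∘ (base_incl h ∘ ev H S (base h)))).
  { unfold reset_endo, reset. ccc_simpl. reflexivity. }
  rewrite (comp_assoc _ (base_incl h)), reset_endo_incl, base_retr_incl. reflexivity.
Qed.

Lemma counit_hom : is_T_algebra_hom (Kstr H S (base h)) h (counit h).
Proof.
  unfold counit, is_T_algebra_hom, Kstr, Tmap, expmap, prodmap.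
  repeat progress (ccc_simpl; rewrite ?(alg_bind Hh)).
  apply alg_state_irrelevant_incl.
Qed.

End Base.

Definition base_map X (h : Hom (TS X) X) X' (h' : Hom (TS X') X')
  (u : Hom X X') : Hom (base h) (base h') := base_retr h' ∘ (u ∘ base_incl h).

Lemma base_map_id X (h : Hom (TS X) X) : is_T_algebra h ->
  base_map h h (idm X) = idm _.
Proof.
  intro Hh. unfold base_map. rewrite comp_id_l, <- (comp_id_r (base_incl h)).
  apply (base_retr_incl Hh).
Qed.

Lemma base_map_comp X1 (h1 : Hom (TS X1) X1) X2 (h2 : Hom (TS X2) X2)
  X3 (h3 : Hom (TS X3) X3) (u : Hom X1 X2) (v : Hom X2 X3) :
  is_T_algebra h1 -> is_T_algebra_hom h1 h2 u ->
  base_map h1 h3 (v ∘ u) = base_map h2 h3 v ∘ base_map h1 h2 u.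
Proof.
  intros Hh1 Hu. unfold base_map. ccc_simpl.
  rewrite base_incl_retr, (alg_hom_reset_endo Hu), (reset_endo_incl Hh1). reflexivity.
Qed.


Lemma counit_nat X (h : Hom (TS X) X) X' (h' : Hom (TS X') X') (u : Hom X X') :
  is_T_algebra h -> is_T_algebra_hom h h' u ->
  u ∘ counit h = counit h' ∘ expmap H S (base_map h h' u).
Proof.
  intros Hh Hu. pose proof Hu as E. unfold_state_monad.
  unfold counit, base_map. rewrite comp_assoc, <- E. ccc_simpl.
  rewrite base_incl_retr, (alg_hom_reset_endo Hu),
    (comp_assoc _ (base_incl h) (reset_endo h)), (reset_endo_incl Hh).
  reflexivity.
Qed.

Definition ev_s0 Y : Hom (exp H S Y) Y :=
  ev H S Y ∘ pair H (s0 ∘ bang H (exp H S Y)) (idm _).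

Lemma reset_endo_Kstr Y : reset_endo (Kstr H S Y) = curry H (pr2 H S Y) ∘ ev_s0 Y.
Proof.
  unfold reset_endo, reset, ev_s0. unfold_state_monad. apply exp_ext. ccc_simpl.
  reflexivity.
Qed.

Definition unit Y : Hom Y (base (Kstr H S Y)) :=
  base_retr (Kstr H S Y) ∘ curry H (pr2 H S Y).

Lemma unit_iso Y : is_iso (unit Y).
Proof.
  exists (ev_s0 Y ∘ base_incl (Kstr H S Y)). unfold unit. split.
  - rewrite <- comp_assoc, base_incl_retr, reset_endo_Kstr. unfold ev_s0.
    ccc_simpl. reflexivity.
  - rewrite <- !comp_assoc, (comp_assoc _ (ev_s0 Y)), <- reset_endo_Kstr,
      (reset_endo_incl (Kstr_algebra Y)).
    rewrite <- (comp_id_r (base_incl _)). apply (base_retr_incl (Kstr_algebra Y)).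
Qed.

Lemma unit_nat Y Y' (g : Hom Y Y') :
  base_map (Kstr H S Y) (Kstr H S Y') (expmap H S g) ∘ unit Y = unit Y' ∘ g.
Proof.
  unfold base_map, unit. ccc_simpl.
  rewrite base_incl_retr, <- (alg_hom_reset_endo (Kstr_hom g)), <- base_incl_retr,
    (base_retr_incl (Kstr_algebra Y')).
  unfold expmap. ccc_simpl. reflexivity.
Qed.

End StateAlgebras.

Theorem mainTheorem11 (C : Category) (H : CCC C) (S : C) :
  has_regular_epi_mono_factorizations C ->
  inhabited (Hom (one H) S) ->
  comparison_is_equivalence H S.
Proof.
  intros F [s0].
  split; [exact (@Kstr_algebra C H S) |].
  split; [exact (@Kstr_hom C H S) |].
  exists (fun X h => base s0 F h), (fun X h X' h' u => base_map s0 F h h' u),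
    (unit s0 F), (fun X h => counit s0 F h).
  split; [intros X h Hh; exact (base_map_id s0 F Hh) |].
  split; [intros * Hh1 _ _ Hu _; apply (base_map_comp s0 F); assumption |].
  split; [exact (unit_iso s0 F) |].
  split; [exact (unit_nat s0 F) |].
  split.
  - intros X h Hh.
    pose proof (counit_inv_counit s0 F Hh) as Hinv_l.
    pose proof (counit_counit_inv s0 F Hh) as Hinv_r.
    pose proof (counit_hom s0 F Hh) as Hhom.
    split; [exact Hhom |].
    exists (counit_inv s0 F h).
    split; [exact Hinv_l |]. split; [exact Hinv_r |].
    exact (alg_hom_inverse Hinv_l Hinv_r Hhom).
  - intros * Hh _ Hu. exact (counit_nat s0 F Hh Hu).
Qed.
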